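(* Let $\mathbb N^n$ be the free commutative monoid on generators $a_1,\dots,a_n$, let $T^n\subset\mathbb N^n$ be the set of products $a_{i_1}a_{i_2}\cdots a_{i_k}$ with $1\leqslant i_1<\dots<i_k\leqslant n$ (including the empty product $1$), and let $\mathfrak FT^n$ be the full subcategory of $\mathfrak F\mathbb N^n$ with object set $T^n$. Then the inclusion $\mathfrak FT^n\subset\mathfrak F\mathbb N^n$ is strong coinitial.
   Context: For a monoid $M$, $\mathfrak FM$ has objects the elements of $M$ and morphisms $\alpha\to\beta$ the pairs $(f,g)$ with $g\alpha f=\beta$; composition $(f_2,g_2)\circ(f_1,g_1)=(f_1f_2,g_2g_1)$. A functor $S:\mathcal C\to\mathcal D$ of small categories is strong coinitial if for every object $d$ the comma category $S/d$ (objects $(c,\alpha:S(c)\to d)$; morphisms $f:c_1\to c_2$ with $\alpha_2\circ S(f)=\alpha_1$) is connected and satisfies $\varinjlim{}_q^{S/d}\Delta\mathbb Z=0$ for $q>0$, where $\Delta\mathbb Z$ is the constant functor with value $\mathbb Z$ and $\varinjlim{}_q$ the left derived functors of the colimit. *)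

From HB Require Import structures.
From mathcomp Require Import all_boot all_order all_algebra.
From Stdlib Require Import Relation_Operators.
Set Implicit Arguments. Unset Strict Implicit. Unset Printing Implicit Defensive.
Import GRing.Theory Num.Theory.

(** A category is given by carriers [Ob], [Mor] (with decidable equality),
   predicates [isOb]/[isMor] selecting the actual objects/morphisms inside the
   carriers, source/target maps, identities and composition
   ([comp g f] = g o f, meaningful when [tgt f = src g]). *)
Record cat := Cat {
  Ob : eqType; Mor : eqType;
  isOb : pred Ob; isMor : pred Mor;
  src : Mor -> Ob; tgt : Mor -> Ob;
  idm : Ob -> Mor; comp : Mor -> Mor -> Mor }.

Record functor (C D : cat) := Functor {
  fobj : Ob C -> Ob D; fmor : Mor C -> Mor D }.

Definition full_sub (C : cat) (P : pred (Ob C)) : cat :=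
  @Cat (Ob C) (Mor C) (fun x => @isOb C x && P x)
       (fun m => [&& @isMor C m, @isOb C (@src C m), @isOb C (@tgt C m),
                     P (@src C m) & P (@tgt C m)])
       (@src C) (@tgt C) (@idm C) (@comp C).

Definition incl (C : cat) (P : pred (Ob C)) : functor (full_sub P) C :=
  @Functor (full_sub P) C id id.

(** Comma category S/d: objects (c, a : S c -> d); morphisms f : c1 -> c2 with
    a2 o S f = a1.  A morphism is stored as ((source, target), f). *)
Section Comma.
Variables (C D : cat) (S : functor C D) (d : Ob D).

Definition comma_isOb (p : Ob C * Mor D) : bool :=
  [&& @isOb C p.1, @isMor D p.2, @src D p.2 == @fobj _ _ S p.1 & @tgt D p.2 == d].

Definition comma_isMor (m : (Ob C * Mor D) * (Ob C * Mor D) * Mor C) : bool :=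
  [&& comma_isOb m.1.1, comma_isOb m.1.2, @isMor C m.2,
      @src C m.2 == m.1.1.1, @tgt C m.2 == m.1.2.1 &
      @comp D m.1.2.2 (@fmor _ _ S m.2) == m.1.1.2].

Definition comma : cat :=
  @Cat ((Ob C * Mor D)%type : eqType)
       (((Ob C * Mor D) * (Ob C * Mor D) * Mor C)%type : eqType)
       comma_isOb comma_isMor
       (fun m => m.1.1) (fun m => m.1.2)
       (fun x => ((x, x), @idm C x.1))
       (fun g f => ((f.1.1, g.1.2), @comp C g.2 f.2)).
End Comma.

Definition connected (C : cat) : Prop :=
  (exists x, @isOb C x) /\
  forall x y, @isOb C x -> @isOb C y ->
    clos_refl_sym_trans (Ob C)
      (fun a b => exists m, [/\ @isMor C m, @src C m = a & @tgt C m = b]) x y.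

(** * Left derived functors of colim applied to the constant functor Z,
    computed by the standard (simplicial replacement / nerve) complex:
    colim_q^C (Delta Z) = H_q (Z[N_* C], sum_i (-1)^i d_i).
    A q-simplex of the nerve is (x0, [:: m1; ...; mq]) with
    x0 -m1-> x1 -m2-> ... -mq-> xq. *)
Section Nerve.
Variable C : cat.

Definition simplex := (Ob C * seq (Mor C))%type.

Fixpoint composable (x : Ob C) (ms : seq (Mor C)) : bool :=
  if ms is m :: r then [&& @isMor C m, @src C m == x & composable (@tgt C m) r]
  else true.

Definition is_simplex (q : nat) (s : simplex) : bool :=
  [&& @isOb C s.1, size s.2 == q & composable s.1 s.2].

Definition face (i : nat) (s : simplex) : simplex :=
  let: (x0, ms) := s in
  if i == 0 then (if ms is m :: r then (@tgt C m, r) else s)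
  else if i == size ms then (x0, take i.-1 ms)
  else match drop i.-1 ms with
       | a :: b :: r => (x0, take i.-1 ms ++ @comp C b a :: r)
       | _ => s end.

Definition chain := seq (simplex * int).

Definition coef (c : chain) (s : simplex) : int :=
  (\sum_(p <- c | p.1 == s) p.2)%R.

Definition bd (c : chain) : chain :=
  flatten [seq (if p.1.2 is [::] then [::]
                else [seq (face i p.1, ((-1) ^+ i * p.2)%R)
                     | i <- iota 0 (size p.1.2).+1]) | p <- c].

Definition is_chain (q : nat) (c : chain) : bool :=
  all (is_simplex q) (map fst c).

Definition colim_derived_const_Z_vanishes (q : nat) : Prop :=
  forall c : chain, is_chain q c -> (forall s, coef (bd c) s = 0%R) ->
    exists b : chain, is_chain q.+1 b /\ forall s, coef (bd b) s = coef c s.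
End Nerve.

Definition strong_coinitial (C D : cat) (S : functor C D) : Prop :=
  forall d, @isOb D d ->
    connected (comma S d) /\
    forall q, 0 < q -> colim_derived_const_Z_vanishes (comma S d) q.

(** Elements of N^n are exponent vectors {ffun 'I_n -> nat}; the product is
   pointwise addition, unit is 0, generator a_i is the i-th unit vector. *)
Section FreeMonoid.
Variable n : nat.
Definition Nn := {ffun 'I_n -> nat}.
Definition mulN (x y : Nn) : Nn := [ffun i => x i + y i].
Definition oneN : Nn := [ffun => 0%N].
Definition gen (i : 'I_n) : Nn := [ffun j => nat_of_bool (j == i)].

Definition inT (x : Nn) : bool :=
  [exists A : {set 'I_n}, x == \big[mulN/oneN]_(i in A) gen i].

(* morphism (alpha, beta, f, g) : alpha -> beta with g alpha f = beta;
   composition (f2,g2) o (f1,g1) = (f1 f2, g2 g1) *)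
Definition FN : cat :=
  @Cat (Nn : eqType) ((Nn * Nn * Nn * Nn)%type : eqType)
    predT (fun m => m.1.1.2 == mulN (mulN m.2 m.1.1.1) m.1.2)
    (fun m => m.1.1.1) (fun m => m.1.1.2)
    (fun x => (x, x, oneN, oneN))
    (fun m2 m1 => (m1.1.1.1, m2.1.1.2, mulN m1.1.2 m2.1.2, mulN m2.2 m1.2)).

Definition FT : cat := full_sub (C:=FN) inT.
End FreeMonoid.

From Pilot Require Import Defs.
From mathcomp Require Import all_boot all_order all_algebra.
From mathcomp Require Import ring zify.
From Stdlib Require Import Relation_Operators.
Set Implicit Arguments. Unset Strict Implicit. Unset Printing Implicit Defensive.
Import GRing.Theory Num.Theory.

(* The comma category S/d is thin: an object is a factorisation d = g c f with
   c squarefree, hence is determined by (f, g), and there is exactly one arrow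
   (f, g) -> (f', g') when f' <= f and g' <= g, and none otherwise.  In each
   coordinate the admissible pairs form a zigzag, and clamping every coordinate
   at level k gives monotone maps related by natural transformations
   id = A_K -> B_(K-1) <- A_(K-1) -> ... <- A_0 = const.  Naturally related maps
   are chain homotopic on the nerve (prism operator), so a cycle of positive
   degree is homologous to a multiple of the degenerate simplex at one point,
   which is a boundary or vanishes by a parity count. *)

Section Pairing.
Variable R : pzRingType.
Local Open Scope ring_scope.

(* Chains are lists of weighted simplices, repetitions allowed; they are compared
   through the functionals [pairing c], which only see coefficients. *)
Definition pairing (A : Type) (c : seq (A * R)) (g : A -> R) : R :=
  \sum_(p <- c) p.2 * g p.1.

Definition lin_ext (A B : Type) (phi : A -> seq (B * R)) (c : seq (A * R)) :=
  flatten [seq [seq (u.1, p.2 * u.2) | u <- phi p.1] | p <- c].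

Definition oppc (A : Type) (c : seq (A * R)) := [seq (p.1, - p.2) | p <- c].

Variables A B : Type.
Implicit Types (c : seq (A * R)) (g : A -> R).

Lemma pairing_nil g : pairing [::] g = 0.
Proof. exact: big_nil. Qed.

Lemma pairing_cons p c g : pairing (p :: c) g = p.2 * g p.1 + pairing c g.
Proof. exact: big_cons. Qed.

Lemma pairing_cat c1 c2 g : pairing (c1 ++ c2) g = pairing c1 g + pairing c2 g.
Proof. exact: big_cat. Qed.

Lemma pairing_opp c g : pairing (oppc c) g = - pairing c g.
Proof. by rewrite /pairing big_map -sumrN; apply: eq_bigr => p _; rewrite mulNr. Qed.

Lemma pairingB c g1 g2 :
  pairing c (fun t => g1 t - g2 t) = pairing c g1 - pairing c g2.
Proof. by rewrite /pairing -sumrB; apply: eq_bigr => p _; rewrite mulrBr. Qed.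

Lemma pairingD c g1 g2 :
  pairing c (fun t => g1 t + g2 t) = pairing c g1 + pairing c g2.
Proof. by rewrite /pairing -big_split; apply: eq_bigr => p _; rewrite mulrDr. Qed.

Lemma pairing_const c a : pairing c (fun _ => a) = pairing c (fun _ => 1) * a.
Proof. by rewrite /pairing mulr_suml; apply: eq_bigr => p _; rewrite mulr1. Qed.

Lemma eq_pairing c g1 g2 : g1 =1 g2 -> pairing c g1 = pairing c g2.
Proof. by move=> eq_g; apply: eq_bigr => p _; rewrite eq_g. Qed.

Lemma pairing_lin_ext (phi : A -> seq (B * R)) c (g : B -> R) :
  pairing (lin_ext phi c) g = pairing c (fun t => pairing (phi t) g).
Proof.
rewrite /pairing big_flatten big_map; apply: eq_bigr => p _.
by rewrite big_map mulr_sumr; apply: eq_bigr => u _; rewrite mulrA.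
Qed.

End Pairing.

Section PairingEq.
Variables (R : pzRingType) (A : eqType).
Local Open Scope ring_scope.
Implicit Types (c : seq (A * R)) (g : A -> R).

Lemma all_lin_ext (B : Type) (P : pred B) (phi : A -> seq (B * R)) c :
  (forall p, p \in c -> all P (map fst (phi p.1))) ->
  all P (map fst (lin_ext phi c)).
Proof.
elim: c => [|p c IHc] //= Pc; rewrite map_cat all_cat -map_comp.
have -> : [seq (fst \o (fun u => (u.1, p.2 * u.2))) u | u <- phi p.1] = map fst (phi p.1).
  exact: eq_map.
rewrite Pc ?mem_head //=; apply: IHc => p' c_p'.
by apply: Pc; rewrite in_cons c_p' orbT.
Qed.

Lemma eq_in_pairing c g1 g2 :
  (forall p, p \in c -> g1 p.1 = g2 p.1) -> pairing c g1 = pairing c g2.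
Proof. by move=> eq_g; apply: eq_big_seq => p /eq_g ->. Qed.

Lemma coef_pairing c s : \sum_(p <- c | p.1 == s) p.2 = pairing c (fun t => (t == s)%:R).
Proof.
by rewrite /pairing big_mkcond; apply: eq_bigr => p _; case: eqP; rewrite ?mulr1 ?mulr0.
Qed.

Lemma pairing_eq_coef c1 c2 :
  (forall s, \sum_(p <- c1 | p.1 == s) p.2 = \sum_(p <- c2 | p.1 == s) p.2) ->
  forall g, pairing c1 g = pairing c2 g.
Proof.
move=> eq_coef g; pose U := undup (map fst (c1 ++ c2)).
have pairingE c : {subset map fst c <= U} ->
    pairing c g = \sum_(t <- U) (\sum_(p <- c | p.1 == t) p.2) * g t.
  move=> sub_cU; under eq_bigr => t _ do rewrite big_mkcond mulr_suml.
  rewrite exchange_big; apply: eq_big_seq => p c_p.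
  rewrite (bigD1_seq p.1) ?undup_uniq ?sub_cU ?map_f //= eqxx big1 ?addr0 // => t.
  by rewrite eq_sym => /negbTE ->; rewrite mul0r.
rewrite !pairingE; first by apply: eq_bigr => t _; rewrite eq_coef.
all: by move=> x x_c; rewrite mem_undup map_cat mem_cat x_c ?orbT.
Qed.
End PairingEq.

Section VertexLists.
Variables (R : comPzRingType) (T : Type).
Local Open Scope ring_scope.
Implicit Types (X : seq T) (g : seq T -> R).

Fixpoint rem_nth (i : nat) X : seq T :=
  if X is x :: X' then (if i is j.+1 then x :: rem_nth j X' else X') else [::].

Definition bd_seq X : seq (seq T * R) :=
  [seq (rem_nth i X, (-1) ^+ i) | i <- iota 0 (size X)].

Lemma sum_iota_sign m : \sum_(i <- iota 0 m) (-1) ^+ i = (odd m)%:R :> R.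
Proof.
elim: m => [|m IHm]; first by rewrite big_nil.
rewrite -addn1 iotaD big_cat big_seq1 IHm add0n addn1 /= -signr_odd.
by case: (odd m); rewrite /= ?expr1 ?expr0 ?addrN ?add0r.
Qed.

Lemma pairing_bd_seq_cons x X g :
  pairing (bd_seq (x :: X)) g = g X - pairing (bd_seq X) (fun Y => g (x :: Y)).
Proof.
rewrite /bd_seq /= pairing_cons expr0 mul1r -(addn0 1%N) iotaDl -map_comp.
rewrite /pairing !big_map -sumrN; congr (_ + _); apply: eq_bigr => i _.
by rewrite /= exprS mulN1r mulNr.
Qed.

Lemma pairing_bd_seq_map (F : T -> T) X g :
  pairing (bd_seq (map F X)) g = pairing (bd_seq X) (fun Y => g (map F Y)).
Proof.
rewrite /bd_seq size_map /pairing !big_map; apply: eq_bigr => i _ /=.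
by congr (_ * g _); elim: X i => [|x X IHX] [|i] //=; rewrite IHX.
Qed.

Lemma pairing_bd_seq_nseq a m g :
  pairing (bd_seq (nseq m.+1 a)) g = (odd m.+1)%:R * g (nseq m a).
Proof.
rewrite /pairing /bd_seq size_nseq big_map -sum_iota_sign mulr_suml.
apply: eq_big_seq => i; rewrite mem_iota ltnS => /andP [_ le_im] /=.
by congr (_ * g _); elim: m i le_im => [|m IHm] [|i] //= le_im; rewrite IHm.
Qed.

Variables F G : T -> T.

(* The triangulation of the prism over [x0, ..., xq]: its simplices are
   [F x0, ..., F xi, G xi, ..., G xq] with sign (-1)^i. *)
Fixpoint prism X : seq (seq T * R) :=
  if X is x :: X' then
    (F x :: G x :: map G X', 1) :: [seq (F x :: p.1, - p.2) | p <- prism X']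
  else [::].

Lemma map_fst_prism_cons x X : map fst (prism (x :: X)) =
  (F x :: G x :: map G X) :: map (cons (F x)) (map fst (prism X)).
Proof. by rewrite /= -!map_comp. Qed.

Lemma pairing_prism_cons x X g :
  pairing (prism (x :: X)) g =
  g (F x :: G x :: map G X) - pairing (prism X) (fun Y => g (F x :: Y)).
Proof.
rewrite /= pairing_cons mul1r /pairing big_map -sumrN; congr (_ + _).
by apply: eq_bigr => p _; rewrite mulNr.
Qed.

(* The prism identity bd P + P bd = G - F, evaluated against g. *)
Lemma bd_prism X g :
  pairing (prism X) (fun Y => pairing (bd_seq Y) g) =
  g (map G X) - g (map F X) - pairing (bd_seq X) (fun Y => pairing (prism Y) g).
Proof.
elim: X g => [|x X IHX] g; first by rewrite /bd_seq !pairing_nil subrr subr0.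
rewrite pairing_prism_cons !pairing_bd_seq_cons pairing_bd_seq_map.
rewrite (eq_pairing _ (fun Y => pairing_bd_seq_cons (F x) Y g)) pairingB IHX.
rewrite (eq_pairing _ (fun Y => pairing_prism_cons x Y g)) pairingB /=.
ring.
Qed.

End VertexLists.
Arguments bd_seq {R T}.
Arguments prism {R T}.

Section NerveChains.
Variable C : Defs.cat.
Local Open Scope ring_scope.
Implicit Types (t : simplex C) (z : chain C) (g : simplex C -> int).

Definition face_sum t g : int :=
  if t.2 is [::] then 0 else \sum_(i <- iota 0 (size t.2).+1) (-1) ^+ i * g (face i t).

Lemma pairing_bd z g : pairing (bd z) g = pairing z (face_sum ^~ g).
Proof.
rewrite /pairing /bd big_flatten big_map; apply: eq_bigr => p _.
rewrite /face_sum; case: p.1.2 => [|m ms]; first by rewrite big_nil mulr0.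
rewrite big_map mulr_sumr; apply: eq_bigr => i _ /=.
by rewrite mulrA [p.2 * _]mulrC.
Qed.

Lemma face_succ i x y m ms :
  (0 < i)%N -> face i.+1 (x, m :: ms) = (x, m :: (@face C i (y, ms)).2).
Proof.
case: i => [|i] // _; rewrite /face /= eqSS.
by case: eqP => //= _; case: (drop i ms) => [|a [|b r]].
Qed.

Definition is_cycle z := forall s, coef (bd z) s = 0.

Definition homologous q z1 z2 := exists b,
  is_chain q.+1 b /\ forall g, pairing z1 g = pairing z2 g + pairing (bd b) g.

Lemma pairing_bd_cycle z g : is_cycle z -> pairing (bd z) g = 0.
Proof.
move=> cyc_z; rewrite (@pairing_eq_coef _ _ _ [::]) ?pairing_nil // => s.
by have := cyc_z s; rewrite /coef => ->; rewrite big_nil.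
Qed.

Lemma cycle_augmentation q z : (0 < q)%N -> is_chain q z -> is_cycle z ->
  pairing z (fun _ => 1) * (odd q.+1)%:R = 0.
Proof.
move=> q_gt0 chain_z cyc_z; rewrite -(pairing_bd_cycle (fun _ => 1) cyc_z).
rewrite pairing_bd -pairing_const; apply: eq_in_pairing => p z_p.
have /and3P [_ /eqP size_p _] := allP chain_z _ (map_f fst z_p).
rewrite /face_sum size_p; case: p.1.2 size_p => [|m ms] size_p.
  by rewrite -size_p in q_gt0.
by rewrite -sum_iota_sign; apply: eq_bigr => i _; rewrite mulr1.
Qed.

Lemma homologous_eq q z1 z2 :
  (forall g, pairing z1 g = pairing z2 g) -> homologous q z1 z2.
Proof. by move=> eq_z; exists [::]; split=> // g; rewrite /bd pairing_nil addr0. Qed.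

Lemma homologous_sym q z1 z2 : homologous q z1 z2 -> homologous q z2 z1.
Proof.
case=> b [chain_b eq_b]; exists (oppc b); split.
  by rewrite /is_chain /oppc -map_comp.
by move=> g; rewrite pairing_bd pairing_opp -pairing_bd eq_b addrK.
Qed.

Lemma homologous_trans q z1 z2 z3 :
  homologous q z1 z2 -> homologous q z2 z3 -> homologous q z1 z3.
Proof.
case=> b1 [chain_b1 eq_b1] [b2 [chain_b2 eq_b2]]; exists (b2 ++ b1); split.
  by rewrite /is_chain map_cat all_cat; apply/andP.
by move=> g; rewrite eq_b1 eq_b2 -addrA !pairing_bd pairing_cat.
Qed.

Lemma homologous_nil_boundary q z : homologous q z [::] ->
  exists b, is_chain q.+1 b /\ forall s, coef (bd b) s = coef z s.
Proof.
case=> b [chain_b eq_b]; exists b; split=> // s.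
by rewrite /coef !coef_pairing eq_b pairing_nil add0r.
Qed.
End NerveChains.

Section ThinNerve.
Variables (C : Defs.cat) (arr : Ob C -> Ob C -> Mor C).
(* [arr x y] is the only candidate arrow x -> y; [le x y] says that it is one. *)
Local Notation le := (fun x y => @isMor C (arr x y)).
Hypotheses (src_arr : forall x y, src (arr x y) = x)
           (tgt_arr : forall x y, tgt (arr x y) = y).
Hypothesis arrE : forall m, isMor m -> m = arr (src m) (tgt m).
Hypothesis comp_arr :
  forall x y z, le x y -> le y z -> Defs.comp (arr y z) (arr x y) = arr x z.
Hypotheses (le_isObl : forall x y, le x y -> isOb x)
           (le_isObr : forall x y, le x y -> isOb y).
Local Open Scope ring_scope.
Implicit Types (x y : Ob C) (X Y : seq (Ob C)) (z : chain C) (g : simplex C -> int).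

Fixpoint arrs x Y : seq (Mor C) :=
  if Y is y :: Y' then arr x y :: arrs y Y' else [::].

Definition vsimplex x Y : simplex C := (x, arrs x Y).

Definition verts (t : simplex C) : seq (Ob C) := t.1 :: map (@tgt C) t.2.

Definition on_verts g X : int := if X is x :: Y then g (vsimplex x Y) else 0.

Definition vchain X : chain C := if X is x :: Y then [:: (vsimplex x Y, 1)] else [::].

Lemma size_arrs x Y : size (arrs x Y) = size Y.
Proof. by elim: Y x => //= y Y IHY x; rewrite IHY. Qed.

Lemma verts_vsimplex x Y : verts (vsimplex x Y) = x :: Y.
Proof.
by rewrite /verts /=; congr (_ :: _); elim: Y x => //= y Y IHY x; rewrite tgt_arr IHY.
Qed.

Lemma pairing_vchain X g : pairing (vchain X) g = on_verts g X.
Proof. by case: X => [|x Y]; rewrite ?pairing_nil //= pairing_cons pairing_nil addr0 mul1r. Qed.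

Lemma path_isOb x Y : path le x Y -> all (@isOb C) Y.
Proof. by elim: Y x => //= y Y IHY x /andP [/le_isObr -> /IHY]. Qed.

Lemma is_simplex_vsimplex q x Y :
  is_simplex q (vsimplex x Y) = [&& isOb x, size Y == q & path le x Y].
Proof.
rewrite /is_simplex /= size_arrs; congr [&& _, _ & _].
by elim: Y x => //= y Y IHY x; rewrite src_arr tgt_arr eqxx IHY.
Qed.

Lemma simplexP q t : is_simplex q t ->
  exists x Y, [/\ t = vsimplex x Y, isOb x, size Y = q & path le x Y].
Proof.
case: t => x ms simplex_t; exists x, (map (@tgt C) ms).
suff ms_arrs : ms = arrs x (map (@tgt C) ms).
  move: simplex_t; rewrite {1}ms_arrs is_simplex_vsimplex => /and3P [ox /eqP size_ms path_ms].
  by split; rewrite // /vsimplex -ms_arrs.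
case/and3P: simplex_t => _ _; elim: ms x => //= m ms IHms x /and3P [mor_m /eqP src_m].
by move/IHms <-; rewrite {1}(arrE mor_m) src_m.
Qed.

Lemma face0_vsimplex x y Y : face 0 (vsimplex x (y :: Y)) = vsimplex y Y.
Proof. by rewrite /face /= tgt_arr. Qed.

Lemma faceS_vsimplex i x Y : path le x Y -> (i < size Y)%N ->
  face i.+1 (vsimplex x Y) = vsimplex x (rem_nth i Y).
Proof.
elim: Y x i => [|y Y IHY] x [|i] // /andP [le_xy path_Y] lt_i.
  case: Y {IHY lt_i} path_Y => [|y' Y] //= /andP [le_yy' _].
  by rewrite /face /= comp_arr.
have -> : vsimplex x (y :: Y) = (x, arr x y :: arrs y Y) by [].
by rewrite (@face_succ _ i.+1 x y) // IHY.
Qed.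

Lemma face_sum_vsimplex x Y g : path le x Y ->
  face_sum (vsimplex x Y) g = pairing (bd_seq (x :: Y)) (on_verts g).
Proof.
case: Y => [|y Y] path_Y.
  by rewrite /face_sum /bd_seq /= pairing_cons pairing_nil.
rewrite /face_sum /bd_seq size_arrs /pairing big_map.
apply: eq_big_seq => -[|i]; first by rewrite face0_vsimplex.
by rewrite mem_iota ltnS => /andP [_ le_iY]; rewrite faceS_vsimplex.
Qed.

Definition push (H : Ob C -> Ob C) z : chain C :=
  lin_ext (fun t => vchain (map H (verts t))) z.

Lemma pairing_push_id H q z g : is_chain q z ->
  (forall x, isOb x -> H x = x) -> pairing (push H z) g = pairing z g.
Proof.
move=> chain_z H_id; rewrite pairing_lin_ext; apply: eq_in_pairing => p z_p.
have [x [Y [-> ox _ path_Y]]] := simplexP (allP chain_z _ (map_f fst z_p)).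
rewrite verts_vsimplex pairing_vchain map_id_in // => u.
by rewrite inE => /predU1P [->|/(allP (path_isOb path_Y))]; apply: H_id.
Qed.

Lemma pairing_push_const H p q z g : is_chain q z ->
  (forall x, isOb x -> H x = p) ->
  pairing (push H z) g = pairing z (fun _ => 1) * g (vsimplex p (nseq q p)).
Proof.
move=> chain_z H_p; rewrite pairing_lin_ext -pairing_const.
apply: eq_in_pairing => t z_t.
have [x [Y [-> ox <- path_Y]]] := simplexP (allP chain_z _ (map_f fst z_t)).
rewrite verts_vsimplex pairing_vchain /= H_p //; congr (g (vsimplex _ _)).
by elim: Y x ox path_Y => //= y Y IHY x _ /andP [/le_isObr oy /(IHY y oy)] <-; rewrite H_p.
Qed.

Definition prism_chain (F G : Ob C -> Ob C) z : chain C :=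
  lin_ext (fun t => lin_ext vchain (prism F G (verts t))) z.

Section Homotopy.
Variables F G : Ob C -> Ob C.
Hypotheses (F_mono : forall x y, le x y -> le (F x) (F y))
           (G_mono : forall x y, le x y -> le (G x) (G y))
           (le_FG : forall x, isOb x -> le (F x) (G x)).

Lemma prism_simplex x Y X : isOb x -> path le x Y ->
  X \in map fst (prism F G (x :: Y) : seq (seq (Ob C) * int)) ->
  exists Z, [/\ X = F x :: Z, size Z = (size Y).+1 & path le (F x) Z].
Proof.
elim: Y x X => [|y Y IHY] x X ox path_Y.
  by rewrite inE => /eqP ->; exists [:: G x]; rewrite /= le_FG.
rewrite map_fst_prism_cons inE => /predU1P [->|/mapP [W W_prism ->]].
  exists (G x :: G y :: map G Y); split; rewrite //= ?size_map // le_FG //=.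
  by case/andP: path_Y => le_xy path_Y; rewrite G_mono //= (homo_path G_mono).
case/andP: path_Y => le_xy path_Y.
have [W' [-> size_W' path_W']] := IHY y W (le_isObr le_xy) path_Y W_prism.
by exists (F y :: W'); rewrite /= size_W' F_mono.
Qed.

Lemma is_chain_prism q z : is_chain q z -> is_chain q.+1 (prism_chain F G z).
Proof.
move=> chain_z; apply: all_lin_ext => p z_p; apply: all_lin_ext => u u_prism.
have [x [Y [p_xY ox size_Y path_Y]]] := simplexP (allP chain_z _ (map_f fst z_p)).
rewrite p_xY verts_vsimplex in u_prism.
have [Z [-> size_Z path_Z]] := prism_simplex ox path_Y (map_f fst u_prism).
by rewrite /= andbT is_simplex_vsimplex size_Z size_Y eqxx path_Z (le_isObl (le_FG ox)).
Qed.

Lemma homologous_push q z : is_chain q z -> is_cycle z ->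
  homologous q (push G z) (push F z).
Proof.
move=> chain_z cyc_z; exists (prism_chain F G z); split; first exact: is_chain_prism.
move=> g; apply/eqP; rewrite addrC -subr_eq; apply/eqP.
pose k t := pairing (prism F G (verts t)) (on_verts g).
rewrite pairing_bd -[RHS]addr0 -(pairing_bd_cycle k cyc_z) pairing_bd /push /prism_chain.
rewrite !pairing_lin_ext -pairingB -pairingD; apply: eq_in_pairing => p z_p.
have [x [Y [-> ox _ path_Y]]] := simplexP (allP chain_z _ (map_f fst z_p)).
rewrite verts_vsimplex pairing_lin_ext !pairing_vchain face_sum_vsimplex //.
have k_verts : on_verts k =1 fun X => pairing (prism F G X) (on_verts g).
  by case=> [|x' Y'] /=; rewrite /k ?pairing_nil ?verts_vsimplex.
rewrite (eq_pairing _ k_verts).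
pose on_bd Y := pairing (bd_seq Y) (on_verts g).
rewrite [pairing (prism _ _ _) _](@eq_in_pairing _ _ _ _ on_bd); first by rewrite bd_prism subrK.
move=> u u_prism; have [Z [-> _ path_Z]] := prism_simplex ox path_Y (map_f fst u_prism).
by rewrite pairing_vchain /= face_sum_vsimplex.
Qed.
End Homotopy.

Section ZigzagContraction.
Variables (A B : nat -> Ob C -> Ob C) (p0 : Ob C) (K : nat).
Hypothesis le_refl : forall x, isOb x -> le x x.
Hypothesis isOb_p0 : isOb p0.
Hypotheses (A_mono : forall k x y, le x y -> le (A k x) (A k y))
           (B_mono : forall k x y, le x y -> le (B k x) (B k y)).
Hypotheses (le_AB : forall k x, isOb x -> le (A k x) (B k x))
           (le_AsB : forall k x, isOb x -> le (A k.+1 x) (B k x)).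
Hypotheses (A0 : forall x, isOb x -> A 0 x = p0) (AK : forall x, isOb x -> A K x = x).

Lemma zigzag_connected : connected C.
Proof.
pose E a b := exists m, [/\ @isMor C m, src m = a & tgt m = b].
have le_E a b : le a b -> clos_refl_sym_trans _ E a b.
  by move=> le_ab; apply: rst_step; exists (arr a b).
have to_p0 x : isOb x -> clos_refl_sym_trans _ E x p0.
  move=> ox; rewrite -{1}(AK ox); elim: K => [|k IHk]; first by rewrite A0 //; apply: rst_refl.
  apply: rst_trans (le_E _ _ (le_AsB k ox)) _.
  exact: rst_trans (rst_sym _ _ _ _ (le_E _ _ (le_AB k ox))) IHk.
split; first by exists p0.
by move=> x y ox oy; apply: rst_trans (to_p0 x ox) (rst_sym _ _ _ _ (to_p0 y oy)).
Qed.

Lemma homologous_push_A0 q k z : is_chain q z -> is_cycle z ->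
  homologous q (push (A k) z) (push (A 0) z).
Proof.
move=> chain_z cyc_z; elim: k => [|k IHk]; first exact: homologous_eq.
apply: homologous_trans IHk.
apply: homologous_trans
  (homologous_sym (homologous_push (A_mono k.+1) (B_mono k) (le_AsB k) chain_z cyc_z)) _.
exact: (homologous_push (A_mono k) (B_mono k) (le_AB k) chain_z cyc_z).
Qed.

(* The boundary of the degenerate (q+1)-simplex at p0 is odd(q+2) times the
   degenerate q-simplex. *)
Lemma homologous_const_nil q w : w * (odd q.+1)%:R = 0 ->
  homologous q [:: (vsimplex p0 (nseq q p0), w)] [::].
Proof.
have path_p0 m : path le p0 (nseq m p0) by elim: m => //= m ->; rewrite le_refl.
move=> w_odd; exists [:: (vsimplex p0 (nseq q.+1 p0), w)]; split.
  rewrite /is_chain /= andbT is_simplex_vsimplex isOb_p0 /=.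
  by rewrite size_nseq eqxx le_refl ?path_p0.
move=> g; rewrite pairing_bd !pairing_cons !pairing_nil !addr0 add0r.
rewrite face_sum_vsimplex // (pairing_bd_seq_nseq p0 q.+1) mulrA; congr (_ * _).
by move: w_odd => /=; case: (odd q) => /= w_odd; rewrite ?mulr1 // mulr0 -w_odd mulr1.
Qed.

Lemma zigzag_acyclic q : (0 < q)%N -> colim_derived_const_Z_vanishes C q.
Proof.
move=> q_gt0 z chain_z cyc_z; apply: homologous_nil_boundary.
pose w := pairing z (fun _ => 1).
apply: (@homologous_trans _ _ _ (push (A K) z)).
  by apply: homologous_eq => g; rewrite (pairing_push_id g chain_z AK).
apply: homologous_trans (homologous_push_A0 K chain_z cyc_z) _.
apply: (@homologous_trans _ _ _ [:: (vsimplex p0 (nseq q p0), w)]).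
  apply: homologous_eq => g.
  by rewrite (pairing_push_const g chain_z A0) pairing_cons pairing_nil addr0 mulrC.
exact: homologous_const_nil (cycle_augmentation q_gt0 chain_z cyc_z).
Qed.

Lemma zigzag_contractible :
  connected C /\ forall q, (0 < q)%N -> colim_derived_const_Z_vanishes C q.
Proof. by split; [exact: zigzag_connected | exact: zigzag_acyclic]. Qed.
End ZigzagContraction.
End ThinNerve.

Lemma big_gen_apply n (S : {set 'I_n}) j :
  (\big[@mulN n/oneN n]_(i in S) gen i) j = (j \in S).
Proof.
rewrite (big_morph (fun x : Nn n => x j) (id1 := 0) (op1 := addn)); last 2 first.
- by move=> x y; rewrite ffunE.
- by rewrite ffunE.
have [jS|jNS] := boolP (j \in S).
  rewrite (bigD1 j) //= ffunE eqxx big1 // => i /andP [_ ij].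
  by rewrite ffunE eq_sym (negbTE ij).
by rewrite big1 // => i iS; rewrite ffunE; case: eqP => // ji; rewrite ji iS in jNS.
Qed.

Lemma inTE n (c : Nn n) : inT c = [forall i, c i <= 1].
Proof.
apply/existsP/forallP => [[S /eqP -> i] | c_le1].
  by rewrite big_gen_apply; case: (i \in S).
exists [set i | c i == 1]; apply/eqP/ffunP => i.
by rewrite big_gen_apply inE; case: (c i) (c_le1 i) => [|[|]].
Qed.

Section Zigzag.
Implicit Types (D k : nat) (p q : nat * nat).

Definition admissible D p := (p.1 + p.2 <= D) && (D <= p.1 + p.2 + 1).

Definition below p q := (q.1 <= p.1) && (q.2 <= p.2).

(* The admissible pairs for D form the zigzag
   (0, D) -> (0, D-1) <- (1, D-1) -> (1, D-2) <- ... ;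
   [clamp_hi k] and [clamp_lo k] retract it onto its initial segment ending at
   (k, D-k), resp. at (k, D-1-k). *)
Definition clamp_hi k D p := if p.1 < k then p else (k, D - k).

Definition clamp_lo k D p := if p.1 <= k then p else (k, D - k.+1).

Ltac zigzag :=
  rewrite /admissible /below /clamp_hi /clamp_lo /=; repeat case: ifP => /=; lia.

Lemma admissible_clamp_hi k D p : admissible D p -> admissible D (clamp_hi k D p).
Proof. by case: p => f g; zigzag. Qed.

Lemma admissible_clamp_lo k D p : admissible D p -> admissible D (clamp_lo k D p).
Proof. by case: p => f g; zigzag. Qed.

Lemma below_clamp_hi k D p q : admissible D p -> admissible D q -> below p q ->
  below (clamp_hi k D p) (clamp_hi k D q).
Proof. by case: p q => [f g] [f' g']; zigzag. Qed.

Lemma below_clamp_lo k D p q : admissible D p -> admissible D q -> below p q ->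
  below (clamp_lo k D p) (clamp_lo k D q).
Proof. by case: p q => [f g] [f' g']; zigzag. Qed.

Lemma below_clamp_hi_lo k D p : admissible D p -> below (clamp_hi k D p) (clamp_lo k D p).
Proof. by case: p => f g; zigzag. Qed.

Lemma below_clamp_hiS_lo k D p : admissible D p -> below (clamp_hi k.+1 D p) (clamp_lo k D p).
Proof. by case: p => f g; zigzag. Qed.
End Zigzag.

Section SquarefreeComma.
Variables (n : nat) (d : Nn n).
Local Notation C := (comma (incl (C:=FN n) (@inT n)) d).
Implicit Types (x y z : Ob C) (f g : Nn n).

Definition f_of x : Nn n := x.2.1.2.
Definition g_of x : Nn n := x.2.2.
Definition coord x i : nat * nat := (f_of x i, g_of x i).

(* The object (c, (f, g) : c -> d) of S/d, where g c f = d forces c = d - f - g. *)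
Definition comma_obj f g : Ob C :=
  let c := [ffun i => d i - f i - g i] in (c, (c, d, f, g)).

Definition comma_arr x y : Mor C :=
  ((x, y), (x.1, y.1, [ffun i => f_of x i - f_of y i], [ffun i => g_of x i - g_of y i])).

Lemma isOb_comma_obj f g : isOb (comma_obj f g) = [forall i, admissible (d i) (f i, g i)].
Proof.
rewrite /= /comma_isOb /= !eqxx !andbT inTE.
apply/andP/forallP => [[/forallP c_le1 /eqP /ffunP d_eq] i | adm_fg].
  by have := c_le1 i; have := d_eq i; rewrite /admissible /= !ffunE; lia.
split; first by apply/forallP => i; have := adm_fg i; rewrite /admissible ffunE /=; lia.
by apply/eqP/ffunP => i; have := adm_fg i; rewrite /admissible /= !ffunE; lia.
Qed.

Lemma isObP x : isOb x ->
  exists f g, x = comma_obj f g /\ forall i, admissible (d i) (f i, g i).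
Proof.
case: x => c [[[c' d'] f] g] /and4P [/andP [_ inT_c] /eqP /ffunP d'_eq /eqP /= c'_c /eqP /= d'_d].
rewrite {}c'_c {}d'_d in d'_eq *; move: inT_c; rewrite inTE => /forallP c_le1.
have c_eq : c = [ffun i => d i - f i - g i].
  apply/ffunP => i; have := c_le1 i; have := d'_eq i; by rewrite /mulN !ffunE /=; lia.
exists f, g; split; first by rewrite /comma_obj /= -c_eq.
by move=> i; have := c_le1 i; have := d'_eq i; rewrite /admissible /mulN !ffunE /=; lia.
Qed.

Lemma isOb_admissible x i : isOb x -> admissible (d i) (coord x i).
Proof. by case/isObP => f [g [-> adm_fg]]. Qed.

Lemma isMor_comma_arr x y : isOb x -> isOb y ->
  isMor (comma_arr x y) = [forall i, below (coord x i) (coord y i)].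
Proof.
move=> /isObP [f [g [-> adm_fg]]] /isObP [f' [g' [-> adm_fg']]].
have inT_c f1 g1 : (forall i, admissible (d i) (f1 i, g1 i)) ->
    inT [ffun i => d i - f1 i - g1 i].
  move=> adm1; rewrite inTE; apply/forallP => i.
  by have := adm1 i; rewrite ffunE /admissible /=; lia.
have isOb_c f1 g1 : (forall i, admissible (d i) (f1 i, g1 i)) ->
    comma_isOb (incl (C:=FN n) (@inT n)) d (comma_obj f1 g1).
  by move=> adm1; change (@isOb C (comma_obj f1 g1)); rewrite isOb_comma_obj; apply/forallP.
rewrite /= /comma_isMor isOb_c // isOb_c //= !inT_c // !eqxx !xpair_eqE !eqxx /= !andbT.
rewrite /coord /f_of /g_of /=.
apply/and3P/forallP => [[_ /eqP/ffunP f_eq /eqP/ffunP g_eq] i | below_fg].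
  by have := f_eq i; have := g_eq i; rewrite /below /mulN !ffunE /=; lia.
split; apply/eqP/ffunP => i; have := below_fg i; have := adm_fg i; have := adm_fg' i;
  by rewrite /below /admissible /mulN !ffunE /=; lia.
Qed.

Lemma comma_arr_isObl x y : isMor (comma_arr x y) -> isOb x.
Proof. by case/and3P. Qed.

Lemma comma_arr_isObr x y : isMor (comma_arr x y) -> isOb y.
Proof. by case/and3P. Qed.

Lemma comma_arrE m : isMor m -> m = comma_arr (src m) (tgt m).
Proof.
case: m => [[[c1 [[[c1' d1] f1] g1]] [c2 [[[c2' d2] f2] g2]]] [[[s t] hf] hg]].
rewrite /= /comma_isMor /= => /and5P [_ _ _ /eqP s_c1 /andP [/eqP t_c2 /eqP]].
case=> _ _ /ffunP f_eq /ffunP g_eq; rewrite /comma_arr /f_of /g_of /= s_c1 t_c2.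
by congr (_, (_, _, _, _)); apply/ffunP => i;
  [have := f_eq i | have := g_eq i]; rewrite /mulN !ffunE /= => <-; lia.
Qed.

Lemma comp_comma_arr x y z : isMor (comma_arr x y) -> isMor (comma_arr y z) ->
  Defs.comp (comma_arr y z) (comma_arr x y) = comma_arr x z.
Proof.
move=> xy yz; move: (xy) (yz).
rewrite !isMor_comma_arr ?(comma_arr_isObl xy) ?(comma_arr_isObr xy) ?(comma_arr_isObr yz) //.
move=> /forallP below_xy /forallP below_yz; rewrite /= /comma_arr /=.
by congr (_, (_, _, _, _)); apply/ffunP => i; have := below_xy i; have := below_yz i;
  rewrite /below /mulN !ffunE /=; lia.
Qed.

Implicit Types (h : nat -> nat * nat -> nat * nat).

Definition coord_map h x : Ob C :=
  comma_obj [ffun i => (h (d i) (coord x i)).1] [ffun i => (h (d i) (coord x i)).2].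

Definition preserves_admissible h := forall D p, admissible D p -> admissible D (h D p).

Lemma coord_map_coord h x i : coord (coord_map h x) i = h (d i) (coord x i).
Proof. by rewrite /coord /f_of /g_of /= !ffunE -surjective_pairing. Qed.

Lemma isOb_coord_map h x : preserves_admissible h -> isOb x -> isOb (coord_map h x).
Proof.
move=> adm_h ox; rewrite isOb_comma_obj; apply/forallP => i.
by rewrite !ffunE -surjective_pairing adm_h // isOb_admissible.
Qed.

Lemma isMor_coord_map h x y : preserves_admissible h ->
  (forall D p q, admissible D p -> admissible D q -> below p q -> below (h D p) (h D q)) ->
  isMor (comma_arr x y) -> isMor (comma_arr (coord_map h x) (coord_map h y)).
Proof.
move=> adm_h h_mono xy; have ox := comma_arr_isObl xy; have oy := comma_arr_isObr xy.
rewrite isMor_comma_arr ?isOb_coord_map //; apply/forallP => i; rewrite !coord_map_coord.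
by apply: h_mono; rewrite ?isOb_admissible //; move: xy; rewrite isMor_comma_arr // => /forallP.
Qed.

Lemma isMor_coord_map_below h1 h2 x : preserves_admissible h1 -> preserves_admissible h2 ->
  (forall D p, admissible D p -> below (h1 D p) (h2 D p)) ->
  isOb x -> isMor (comma_arr (coord_map h1 x) (coord_map h2 x)).
Proof.
move=> adm_h1 adm_h2 h12 ox; rewrite isMor_comma_arr ?isOb_coord_map //.
by apply/forallP => i; rewrite !coord_map_coord h12 ?isOb_admissible.
Qed.

Lemma coord_map_id h x :
  isOb x -> (forall i, h (d i) (coord x i) = coord x i) -> coord_map h x = x.
Proof.
move=> /isObP [f [g [-> _]]] h_id; rewrite /coord_map.
by congr comma_obj; apply/ffunP => i; rewrite ffunE h_id.
Qed.

Lemma comma_contractible :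
  connected C /\ forall q, (0 < q)%N -> colim_derived_const_Z_vanishes C q.
Proof.
have adm_hi k : preserves_admissible (clamp_hi k) by move=> D p; apply: admissible_clamp_hi.
have adm_lo k : preserves_admissible (clamp_lo k) by move=> D p; apply: admissible_clamp_lo.
apply: (@zigzag_contractible _ comma_arr (fun _ _ => erefl) (fun _ _ => erefl)
          comma_arrE comp_comma_arr comma_arr_isObl comma_arr_isObr
          (fun k => coord_map (clamp_hi k)) (fun k => coord_map (clamp_lo k))
          (comma_obj [ffun => 0] d) (\sum_i d i).+1).
- by move=> x ox; rewrite isMor_comma_arr //; apply/forallP => i; rewrite /below !leqnn.
- by rewrite isOb_comma_obj; apply/forallP => i; rewrite /admissible ffunE /=; lia.
- by move=> k x y; apply: isMor_coord_map => //; exact: below_clamp_hi.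
- by move=> k x y; apply: isMor_coord_map => //; exact: below_clamp_lo.
- by move=> k x; apply: isMor_coord_map_below => //; exact: below_clamp_hi_lo.
- by move=> k x; apply: isMor_coord_map_below => //; exact: below_clamp_hiS_lo.
- by move=> x _; congr comma_obj; apply/ffunP => i; rewrite !ffunE /= subn0.
- move=> x ox; apply: coord_map_id => // i; rewrite /clamp_hi ifT //.
  have : d i <= \sum_j d j by rewrite (bigD1 i) //= leq_addr.
  by have := isOb_admissible i ox; rewrite /admissible /=; lia.
Qed.
End SquarefreeComma.

Theorem mainTheorem15 (n : nat) : strong_coinitial (incl (C:=FN n) (@inT n)).
Proof. move=> d _; exact: comma_contractible. Qed.
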